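(* Let $X$ be a totally disconnected compact metrizable space, $T\colon X\to X$ a homeomorphism, $K$ a field with involution, $\mathcal A=C_K(X)\rtimes_T\mathbb Z$, $E\subseteq X$ a nonempty clopen set and $\mathcal P$ a partition of $X\setminus E$. Let $\mathcal B$ be the unital $*$-subalgebra of $\mathcal A$ generated by $\{\chi_Zt: Z\in\mathcal P\}$ and $\mathcal B_0=C_K(X)\cap\mathcal B$. Then $\mathcal B_0$ is the linear span of $1$ and the projections $$\chi_{T^{-r}(Z_{-r})\cap T^{-r+1}(Z_{-r+1})\cap\cdots\cap Z_0\cap T(Z_1)\cap\cdots\cap T^{s-1}(Z_{s-1})}$$ with $r,s\ge0$ and $Z_{-r},\dots,Z_{s-1}\in\mathcal P$.
   Context: $C_K(X)$ is the $*$-algebra of locally constant functions $X\to K$ (pointwise operations, $f^*=\bar f$), $\chi_U$ the characteristic function of a clopen $U$. $\mathcal A=C_K(X)\rtimes_T\mathbb Z$ is the algebraic crossed product: finite sums $\sum_if_it^i$ with $f_i\in C_K(X)$, multiplication determined by $tf=(f\circ T^{-1})t$ (so $t\chi_Ut^{-1}=\chi_{T(U)}$), involution $(ft^i)^*=t^{-i}f^*$, and $t^{-1}=t^*$. A partition of a clopen set $Y$ is a finite family of nonempty, pairwise disjoint clopen subsets with union $Y$. *)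

From HB Require Import structures.
From mathcomp Require Import all_boot all_order all_algebra.
From Stdlib Require Rdefinitions Raxioms.
Set Implicit Arguments. Unset Strict Implicit. Unset Printing Implicit Defensive.
Import Order.TTheory GRing.Theory Num.Theory.
Local Open Scope ring_scope.

Section Topology.
Variable X : Type.
Variable opn : (X -> Prop) -> Prop.

Definition is_topology : Prop :=
  [/\ opn (fun _ => True),
      (forall F : (X -> Prop) -> Prop, (forall U, F U -> opn U) ->
          opn (fun x => exists2 U, F U & U x))
    & (forall U V, opn U -> opn V -> opn (fun x => U x /\ V x))].

Definition compact_space : Prop :=
  forall (I : Type) (F : I -> X -> Prop),
    (forall i, opn (F i)) -> (forall x, exists i, F i x) ->
    exists l : seq I, forall x, exists2 i, List.In i l & F i x.

Definition connected_subset (S : X -> Prop) : Prop :=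
  forall U V, opn U -> opn V ->
    (forall x, S x -> U x \/ V x) ->
    (forall x, ~ (S x /\ U x /\ V x)) ->
    (forall x, S x -> U x) \/ (forall x, S x -> V x).

Definition totally_disconnected : Prop :=
  forall S, connected_subset S -> forall x y, S x -> S y -> x = y.

Definition metrizable : Prop :=
  exists d : X -> X -> Rdefinitions.R,
    [/\ (forall x y, d x y = Rdefinitions.IZR BinNums.Z0 <-> x = y),
        (forall x y, d x y = d y x),
        (forall x y z, Rdefinitions.Rle (d x z)
                          (Rdefinitions.Rplus (d x y) (d y z)))
      & (forall U, opn U <-> forall x, U x ->
           exists eps, Rdefinitions.Rlt (Rdefinitions.IZR BinNums.Z0) eps /\
             forall y, Rdefinitions.Rlt (d x y) eps -> U y)].

Definition continuous (f : X -> X) : Prop :=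
  forall U, opn U -> opn (fun x => U (f x)).

Definition clopen (A : pred X) : Prop :=
  opn (fun x => A x) /\ opn (fun x => ~~ A x).

End Topology.

Section Crossed.
Variables (X : Type) (K : fieldType) (conj : K -> K) (T Tinv : X -> X).

Definition Tpow (n : int) (x : X) : X :=
  match n with Posz k => iter k T x | Negz k => iter k.+1 Tinv x end.

Definition chi (U : pred X) : X -> K := fun x => if U x then 1 else 0.

(* A formal finite sum  sum_p  p.2 t^{p.1}  is a list of pairs (i, f). *)
Definition cpel := seq (int * (X -> K)).

Definition den (a : cpel) (n : int) (x : X) : K :=
  \sum_(p <- a | p.1 == n) p.2 x.

Definition cp_one : cpel := [:: (0%Z, fun _ => 1)].
Definition cp_add (a b : cpel) : cpel := a ++ b.
Definition cp_scale (c : K) (a : cpel) : cpel :=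
  [seq (p.1, fun x => c * p.2 x) | p <- a].
(* (f t^i)(g t^j) = f (g o T^{-i}) t^{i+j} *)
Definition cp_mul (a b : cpel) : cpel :=
  [seq (p.1 + q.1, fun x => p.2 x * q.2 (Tpow (- p.1) x)) | p <- a, q <- b].
(* (f t^i)^* = t^{-i} f^* = (f^* o T^i) t^{-i} *)
Definition cp_star (a : cpel) : cpel :=
  [seq (- p.1, fun x => conj (p.2 (Tpow p.1 x))) | p <- a].

(* the unital *-subalgebra generated by the elements chi_{Zs i} t, i : I *)
Definition gen_subalg (I : Type) (Zs : I -> pred X) (a : cpel) : Prop :=
  forall Q : cpel -> Prop,
    Q cp_one ->
    (forall i, Q [:: (1%Z, chi (Zs i))]) ->
    (forall b c, Q b -> Q c -> Q (cp_add b c)) ->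
    (forall k b, Q b -> Q (cp_scale k b)) ->
    (forall b c, Q b -> Q c -> Q (cp_mul b c)) ->
    (forall b, Q b -> Q (cp_star b)) ->
    Q a.

(* membership in B_0 = C_K(X) \cap B, for an element given by its
   coefficient function a : int -> X -> K *)
Definition in_B0 (I : Type) (Zs : I -> pred X) (a : int -> X -> K) : Prop :=
  (exists2 s, gen_subalg Zs s & forall n x, den s n x = a n x) /\
  (forall n x, n != 0%Z -> a n x = 0).

(* T^{-r}(Z_{-r}) \cap ... \cap Z_0 \cap ... \cap T^{s-1}(Z_{s-1}),
   where Z_k = Zs (Z k); x \in T^k(W) iff T^{-k} x \in W *)
Definition cyl (I : Type) (Zs : I -> pred X) (r s : nat) (Z : int -> I) : pred X :=
  fun x => [forall i : 'I_(r + s),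
             Zs (Z (i%:Z - r%:Z)) (Tpow (r%:Z - i%:Z) x)].

Definition in_span_proj (I : Type) (Zs : I -> pred X) (a : int -> X -> K) : Prop :=
  exists (c0 : K) (l : seq (K * nat * nat * (int -> I))),
    forall n x, a n x =
      if n == 0%Z then
        c0 + \sum_(q <- l) q.1.1.1 * chi (cyl Zs q.1.1.2 q.1.2 q.2) x
      else 0.

End Crossed.

(* Call a monomial basic if it is a constant in degree 0 or [c chi_C t^n],
   where [C = T^-r(Z_-r) \cap ... \cap T^(s-1)(Z_(s-1))] is a cylinder and
   [-r <= n <= s].  Basic monomials are closed under scalars and adjoints, and
   under products: there the index windows of the two cylinders touch at [n],
   so, the sets of the partition being disjoint, either the cylinders prescribe
   different sets at a common index and the product vanishes, or they glue to a
   single cylinder.  Hence every element of B is a sum of basic monomials and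
   its degree-0 part lies in the span.  Conversely
   [chi_C = (u u^* ) (v v^* )] with [v = (chi_Z_0 t) ... (chi_Z_(s-1) t)] and
   [u = (chi_Z_-1 t)^* ... (chi_Z_-r t)^*]. *)

From HB Require Import structures.
From mathcomp Require Import all_boot all_order all_algebra.
From mathcomp Require Import zify.
From Stdlib Require Import Classical.
Import Order.TTheory GRing.Theory Num.Theory.
Set Implicit Arguments. Unset Strict Implicit. Unset Printing Implicit Defensive.
Local Open Scope ring_scope.

Section CrossedProductCylinders.

Variables (X : Type) (T Tinv : X -> X).
Hypotheses (TK : cancel T Tinv) (TinvK : cancel Tinv T).
Local Notation Tp := (Tpow T Tinv).

Lemma TpowS n x : Tp (1 + n) x = T (Tp n x).
Proof.
case: n => [k|[|k]]; first by rewrite -intS.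
  by rewrite addrN /= TinvK.
have -> : 1 + Negz k.+1 = Negz k by rewrite !NegzE; lia.
by rewrite /= TinvK.
Qed.

Lemma TpowD m n x : Tp (m + n) x = Tp m (Tp n x).
Proof.
have TpowN1 k y : Tp (-1 + k) y = Tinv (Tp k y).
  by rewrite -[in RHS](addNKr 1 k) TpowS TK.
case: m => k; elim: k => [|k IH].
- by rewrite add0r.
- by rewrite intS -addrA !TpowS IH.
- by rewrite NegzE TpowN1.
- have -> : Negz k.+1 = -1 + Negz k by rewrite !NegzE; lia.
  by rewrite -addrA !TpowN1 IH.
Qed.

Variables (I : eqType) (Zs : I -> pred X).
Hypothesis Zs_disj : forall i j x, i != j -> Zs i x -> Zs j x -> False.

Definition window (lo hi : int) (W : int -> I) (x : X) : Prop :=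
  forall j : int, lo <= j < hi -> Zs (W j) (Tp (- j) x).

Lemma window_split lo mid hi W x : lo <= mid <= hi ->
  window lo hi W x <-> window lo mid W x /\ window mid hi W x.
Proof.
move=> /andP[hlo hhi]; split=> [w | [w1 w2] j hj].
  by split=> j hj; apply: w; lia.
by case: (ltrP j mid) => hm; [apply: w1 | apply: w2]; lia.
Qed.

Lemma window1 j W x : window j (j + 1) W x <-> Zs (W j) (Tp (- j) x).
Proof.
split=> [w | hz k hk]; first by apply: w; lia.
by have -> : k = j by lia.
Qed.

Lemma window_shift lo hi W m x :
  window lo hi W (Tp m x) <-> window (lo - m) (hi - m) (fun j => W (j + m)) x.
Proof.
split=> w j hj.
  have := w (j + m) ltac:(lia); rewrite -TpowD.
  by have -> : - (j + m) + m = - j by lia.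
rewrite -TpowD; have := w (j - m) ltac:(lia); rewrite subrK.
by have -> : - (j - m) = - j + m by lia.
Qed.

Local Notation cyl := (cyl T Tinv Zs).

Lemma cylP r s Z x : cyl r s Z x <-> window (- r%:Z) s Z x.
Proof.
split=> [/forallP w j hj | w].
  have jr : (absz (j + r%:Z)%R) = j + r :> int by rewrite gez0_abs //; lia.
  have := w (@Ordinal (r + s) (absz (j + r%:Z)%R) ltac:(lia)); rewrite /= jr.
  have -> : j + r%:Z - r%:Z = j by lia.
  by have -> : r%:Z - (j + r%:Z) = - j by lia.
apply/forallP=> i; rewrite -[r%:Z - _]opprB; apply: w.
by have := ltn_ord i; lia.
Qed.

Lemma cyl_absz lo hi W x : lo <= 0 -> 0 <= hi ->
  cyl `|lo| `|hi| W x <-> window lo hi W x.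
Proof. by move=> hlo hhi; rewrite cylP lez0_abs // gez0_abs // opprK. Qed.

Lemma window_meet lo1 hi1 W1 lo2 hi2 W2 : lo2 <= hi1 -> lo1 <= hi2 ->
  (forall x, window lo1 hi1 W1 x -> window lo2 hi2 W2 x -> False) \/
  exists W, forall x, window (Num.min lo1 lo2) (Num.max hi1 hi2) W x <->
                      window lo1 hi1 W1 x /\ window lo2 hi2 W2 x.
Proof.
move=> h21 h12.
case: (classic (exists j : int, [/\ lo1 <= j < hi1, lo2 <= j < hi2 & W1 j <> W2 j])).
  case=> j [hj1 hj2 /eqP neq]; left=> x w1 w2.
  exact: Zs_disj neq (w1 j hj1) (w2 j hj2).
move=> no_conflict; right.
have agree j : lo1 <= j < hi1 -> lo2 <= j < hi2 -> W1 j = W2 j.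
  by move=> hj1 hj2; apply: NNPP => neq; apply: no_conflict; exists j.
exists (fun j => if lo1 <= j < hi1 then W1 j else W2 j) => x.
split=> [w | [w1 w2] j hj].
  split=> j hj; have /= := w j ltac:(lia).
    by rewrite hj.
  by case: ifP => // hj1; rewrite (agree j hj1 hj).
case: ifP => hj1; first exact: w1.
by apply: w2; move/negbT: hj1; lia.
Qed.

Variables (K : fieldType) (conj : {rmorphism K -> K}).
Local Notation chi := (chi K).

Lemma chi_eq (A B : pred X) x y : (A x <-> B y) -> chi A x = chi B y.
Proof.
move=> AB; rewrite /chi; case: (boolP (A x)) => Ax; case: (boolP (B y)) => By //.
  by case/negP: By; apply/AB.
by case/negP: Ax; apply/AB.
Qed.

Lemma chiM (A B C : pred X) x y z : (C z <-> A x /\ B y) ->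
  chi A x * chi B y = chi C z.
Proof.
move=> CAB; rewrite /chi.
case: (boolP (C z)) => [/CAB [-> ->] | nC]; first by rewrite mulr1.
by case: (boolP (A x)) => Ax; case: (boolP (B y)) => By;
  rewrite ?mulr0 ?mul0r //; case/negP: nC; apply/CAB.
Qed.

Lemma chiM_disj (A B : pred X) x y : (A x -> B y -> False) ->
  chi A x * chi B y = 0.
Proof.
by move=> AB; rewrite /chi; case: (boolP (A x)) => Ax; case: (boolP (B y)) => By;
  rewrite ?mulr0 ?mul0r //; case: (AB Ax By).
Qed.

Lemma conj_chi (A : pred X) x : conj (chi A x) = chi A x.
Proof. by rewrite /chi; case: (A x); rewrite ?rmorph1 ?rmorph0. Qed.

(* Constants are kept apart: when [I] is empty there is no [Z : int -> I],
   not even for the whole space [cyl 0 0 Z]. *)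
Definition basic (p : int * (X -> K)) : Prop :=
  (p.1 = 0 /\ exists c, p.2 =1 fun=> c) \/
  exists c (r s : nat) Z, - r%:Z <= p.1 <= s /\ p.2 =1 fun x => c * chi (cyl r s Z) x.

Lemma basic_window n f c lo hi W : lo <= 0 -> 0 <= hi -> lo <= n <= hi ->
  f =1 (fun x => c * chi (cyl `|lo| `|hi| W) x) -> basic (n, f).
Proof.
move=> hlo hhi hn hf; right; exists c, `|lo|%N, `|hi|%N, W.
by rewrite lez0_abs // gez0_abs // opprK.
Qed.

Lemma basic_scale k p : basic p -> basic (p.1, fun x => k * p.2 x).
Proof.
case: p => n f [[/= -> [c hf]] | [c [r [s [Z [/= hn hf]]]]]].
  by left; split=> //; exists (k * c) => x /=; rewrite hf.
by right; exists (k * c), r, s, Z; split=> // x /=; rewrite hf mulrA.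
Qed.

Lemma basic_star p : basic p -> basic (- p.1, fun x => conj (p.2 (Tp p.1 x))).
Proof.
case: p => n f [[/= -> [c hf]] | [c [r [s [Z [/= hn hf]]]]]].
  by left; split; [rewrite oppr0 | exists (conj c) => x /=; rewrite hf].
apply: (basic_window (c := conj c) (lo := - r%:Z - n) (hi := s%:Z - n)
          (W := fun j => Z (j + n))); try lia.
move=> x; rewrite hf rmorphM conj_chi; congr (_ * _); apply: chi_eq.
by rewrite cylP window_shift cyl_absz //; lia.
Qed.

Lemma basic_mul p q : basic p -> basic q ->
  basic (p.1 + q.1, fun x => p.2 x * q.2 (Tp (- p.1) x)).
Proof.
case: p q => n f [m g] [[/= -> [c hf]] | [c [r [s [Z [/= hn hf]]]]]]
                       [[/= -> [d hg]] | [d [r' [s' [Z' [/= hm hg]]]]]].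
- by left; split; [rewrite addr0 | exists (c * d) => x /=; rewrite hf hg].
- right; exists (c * d), r', s', Z'; split; first by rewrite add0r.
  by move=> x /=; rewrite hf hg mulrA.
- right; exists (c * d), r, s, Z; split; first by rewrite addr0.
  by move=> x /=; rewrite hf hg mulrAC.
have fgE x : f x * g (Tp (- n) x) =
    c * d * (chi (cyl r s Z) x * chi (cyl r' s' Z') (Tp (- n) x)).
  by rewrite hf hg mulrACA.
suff [e [W fgW]] : exists e W, forall x, f x * g (Tp (- n) x) =
    e * chi (cyl `|Num.min (- r%:Z) (- r'%:Z - - n)|
                 `|Num.max s%:Z (s'%:Z - - n)| W) x.
  by apply: basic_window fgW; lia.
have [disj | [W meet]] := window_meet (lo1 := - r%:Z) (hi1 := s) Z
  (lo2 := - r'%:Z - - n) (hi2 := s'%:Z - - n) (fun j => Z' (j + - n))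
  ltac:(lia) ltac:(lia).
- exists 0, Z => x; rewrite fgE chiM_disj ?mulr0 ?mul0r // => /cylP w /cylP.
  by rewrite window_shift; apply: disj.
- exists (c * d), W => x; rewrite fgE; congr (_ * _); apply: chiM.
  by rewrite cyl_absz ?meet ?cylP ?window_shift //; lia.
Qed.

Definition all_basic (s : cpel X K) : Prop := foldr (fun p P => basic p /\ P) True s.

Lemma all_basic_cat s1 s2 : all_basic s1 -> all_basic s2 -> all_basic (s1 ++ s2).
Proof. by elim: s1 => //= p s1 IH [hp hs1] hs2; split; last exact: IH. Qed.

Lemma all_basic_map F s : (forall p, basic p -> basic (F p)) ->
  all_basic s -> all_basic (map F s).
Proof. by move=> hF; elim: s => //= p s IH [hp hs]; split; [apply: hF | apply: IH]. Qed.

Lemma all_basic_allpairs F s1 s2 : (forall p q, basic p -> basic q -> basic (F p q)) ->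
  all_basic s1 -> all_basic s2 -> all_basic [seq F p q | p <- s1, q <- s2].
Proof.
move=> hF; elim: s1 => //= p s1 IH [hp hs1] hs2.
exact: all_basic_cat (all_basic_map (fun q => hF p q hp) hs2) (IH hs1 hs2).
Qed.

Local Notation gen_subalg := (gen_subalg conj T Tinv Zs).

Lemma gen_subalg_all_basic s : gen_subalg s -> all_basic s.
Proof.
apply.
- by split=> //; left; split=> //; exists 1.
- move=> i; split=> //; apply: (basic_window (c := 1) (lo := 0) (hi := 1)
    (W := fun=> i)) => // x.
  by rewrite mul1r; apply: chi_eq; rewrite cyl_absz // -[1]add0r window1.
- exact: all_basic_cat.
- by move=> k s1; apply: all_basic_map => p; apply: basic_scale.
- by move=> s1 s2; apply: all_basic_allpairs => p q; apply: basic_mul.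
- by move=> s1; apply: all_basic_map => p; apply: basic_star.
Qed.

Lemma all_basic_den0 s : all_basic s -> exists c0 (l : seq (K * nat * nat * (int -> I))),
  forall x, den s 0 x = c0 + \sum_(q <- l) q.1.1.1 * chi (cyl q.1.1.2 q.1.2 q.2) x.
Proof.
rewrite /den; elim: s => [|[n f] s IH] /= => [_ | [hp /IH [c0 [l hl]]]].
  by exists 0, [::] => x; rewrite !big_nil add0r.
case: hp => [[/= -> [c hf]] | [c [r [s' [Z [_ /= hf]]]]]].
  by exists (c + c0), l => x; rewrite big_cons /= hf hl addrA.
case: (eqVneq n 0) => [-> | n0].
  by exists c0, ((c, r, s', Z) :: l) => x; rewrite !big_cons /= hf hl addrCA.
by exists c0, l => x; rewrite big_cons /= (negbTE n0).
Qed.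

Lemma gen_subalg_one : gen_subalg (cp_one X K).
Proof. by move=> Q. Qed.

Lemma gen_subalg_gen i : gen_subalg [:: (1%Z, chi (Zs i))].
Proof. by move=> Q _. Qed.

Lemma gen_subalg_add s1 s2 : gen_subalg s1 -> gen_subalg s2 -> gen_subalg (cp_add s1 s2).
Proof.
move=> h1 h2 Q h0 hg hadd hscale hmul hstar.
by apply: (hadd); [apply: (h1 Q) | apply: (h2 Q)].
Qed.

Lemma gen_subalg_scale k s : gen_subalg s -> gen_subalg (cp_scale k s).
Proof. by move=> h Q h0 hg hadd hscale hmul hstar; apply: (hscale); apply: (h Q). Qed.

Lemma gen_subalg_mul s1 s2 : gen_subalg s1 -> gen_subalg s2 ->
  gen_subalg (cp_mul T Tinv s1 s2).
Proof.
move=> h1 h2 Q h0 hg hadd hscale hmul hstar.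
by apply: (hmul); [apply: (h1 Q) | apply: (h2 Q)].
Qed.

Lemma gen_subalg_star s : gen_subalg s -> gen_subalg (cp_star conj T Tinv s).
Proof. by move=> h Q h0 hg hadd hscale hmul hstar; apply: (hstar); apply: (h Q). Qed.

(* [f t^n] lies in B; [=1] instead of [=] avoids function extensionality. *)
Definition inB (n : int) (f : X -> K) : Prop :=
  exists2 g, gen_subalg [:: (n, g)] & g =1 f.

Lemma inB_ext n f g : f =1 g -> inB n f -> inB n g.
Proof. by move=> fg [h hB hf]; exists h => // x; rewrite hf fg. Qed.

Lemma inB_gen i : inB 1 (chi (Zs i)).
Proof. by exists (chi (Zs i)) => //; apply: gen_subalg_gen. Qed.

Lemma inB_mul n m f g : inB n f -> inB m g ->
  inB (n + m) (fun x => f x * g (Tp (- n) x)).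
Proof.
move=> [f' hf' ff'] [g' hg' gg']; exists (fun x => f' x * g' (Tp (- n) x)).
  exact: gen_subalg_mul hf' hg'.
by move=> x; rewrite ff' gg'.
Qed.

Lemma inB_star n f : inB n f -> inB (- n) (fun x => conj (f (Tp n x))).
Proof.
move=> [f' hf' ff']; exists (fun x => conj (f' (Tp n x))).
  exact: gen_subalg_star hf'.
by move=> x; rewrite ff'.
Qed.

(* [chi_A t^n (chi_A t^n)^* = chi_A] *)
Lemma inB_chi_deg0 n (A : pred X) : inB n (chi A) -> inB 0 (chi A).
Proof.
move=> hA; rewrite -(addrN n); apply: inB_ext (inB_mul hA (inB_star hA)) => x.
by rewrite conj_chi -TpowD addrN; apply: chiM; tauto.
Qed.

Lemma inB_cyl_forward (s : nat) Z : inB s (chi (cyl 0 s Z)).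
Proof.
elim: s => [|s IH].
  exists (fun=> 1); first exact: gen_subalg_one.
  by move=> x; rewrite /chi; case: ifP => // /negbT/negP[]; apply/cylP => j; lia.
rewrite -addn1 PoszD; apply: inB_ext (inB_mul IH (inB_gen (Z s))) => x.
apply: chiM; rewrite !cylP oppr0 (window_split (mid := s)) ?window1 //; lia.
Qed.

Lemma inB_cyl_backward r Z : inB (- r%:Z) (chi (cyl r 0 Z)).
Proof.
elim: r => [|r IH]; first by rewrite oppr0; apply: inB_ext (inB_cyl_forward 0 Z).
have := inB_mul IH (inB_star (inB_gen (Z (- r.+1%:Z)))).
have -> : - r%:Z + - 1 = - r.+1%:Z by lia.
apply: inB_ext => x; rewrite conj_chi opprK -TpowD; apply: chiM.
rewrite !cylP (window_split (mid := - r%:Z)) ?oppr0; last lia.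
have -> : - r%:Z = - r.+1%:Z + 1 by lia.
by rewrite window1 opprK; tauto.
Qed.

Lemma inB_cyl r s Z : inB 0 (chi (cyl r s Z)).
Proof.
have := inB_mul (inB_chi_deg0 (inB_cyl_backward r Z))
                (inB_chi_deg0 (inB_cyl_forward s Z)).
apply: inB_ext => x; apply: chiM.
by rewrite !cylP oppr0 (window_split (mid := 0)) //; lia.
Qed.

Lemma gen_subalg_span c0 (l : seq (K * nat * nat * (int -> I))) :
  exists2 s, gen_subalg s & forall n x, den s n x =
    if n == 0 then c0 + \sum_(q <- l) q.1.1.1 * chi (cyl q.1.1.2 q.1.2 q.2) x else 0.
Proof.
elim: l => [|[[[c r] s] Z] l [s0 hs0 hden]].
  exists (cp_scale c0 (cp_one X K)); first exact: gen_subalg_scale gen_subalg_one.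
  by move=> n x; rewrite /den !big_cons !big_nil /= !addr0 mulr1 eq_sym.
have [g hg gE] := inB_cyl r s Z.
exists (cp_add (cp_scale c [:: (0, g)]) s0).
  exact: gen_subalg_add (gen_subalg_scale _ hg) hs0.
move=> n x; rewrite /den big_cat big_cons big_nil -/(den s0 n x) hden.
rewrite big_cons /= gE eq_sym.
by case: ifP; rewrite ?addr0 ?add0r // addrCA.
Qed.

End CrossedProductCylinders.

Theorem lemma3p4
  (X : Type) (opn : (X -> Prop) -> Prop)
  (Htop : is_topology opn) (Hcpt : compact_space opn)
  (Htd : totally_disconnected opn) (Hmet : metrizable opn)
  (T Tinv : X -> X) (HTK : cancel T Tinv) (HTKi : cancel Tinv T)
  (HTc : continuous opn T) (HTic : continuous opn Tinv)
  (K : fieldType) (conj : {rmorphism K -> K}) (Hconj : involutive conj)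
  (E : pred X) (HEcl : clopen opn E) (HEne : exists x, E x)
  (I : finType) (Zs : I -> pred X)
  (HPcl : forall i, clopen opn (Zs i))
  (HPne : forall i, exists x, Zs i x)
  (HPdisj : forall i j x, i != j -> Zs i x -> Zs j x -> False)
  (HPcov : forall x, ~~ E x <-> exists i, Zs i x) :
  forall a : int -> X -> K,
    in_B0 conj T Tinv Zs a <-> in_span_proj T Tinv Zs a.
Proof.
move=> a; split.
- case=> -[s /(gen_subalg_all_basic HTK HTKi HPdisj) /all_basic_den0 [c0 [l hl]] sa] a0.
  exists c0, l => n x; case: eqVneq => [-> | n0]; last exact: a0.
  by rewrite -sa hl.
- case=> c0 [l al]; split; last by move=> n x n0; rewrite al (negbTE n0).
  have [s hs sl] := gen_subalg_span HTK HTKi Zs conj c0 l.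
  by exists s => // n x; rewrite sl al.
Qed.
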